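(* Let $\alpha\in\mathbb{N}$, let $m$ be a positive odd integer with $m>4\alpha+2$, and let $\mathbb{S}=\langle 4,4\alpha+2,m\rangle$, with Betti elements $\beta_1=\beta_2=8\alpha+4$ and $\beta_3=2m$. Then the factorizations of $\beta_1=\beta_2$ (with respect to $(4,4\alpha+2,m)$) are exactly $(2\alpha+1,0,0)$ and $(0,2,0)$, and the factorizations of $\beta_3$ are exactly $(0,0,2)$ and the tuples $\left(\frac{m-k(2\alpha+1)}{2},k,0\right)$ where $k$ ranges over positive odd integers with $k\le\frac{m}{2\alpha+1}$.
   Context: $\mathbb{N}=\{0,1,2,\dots\}$. For a numerical semigroup $\mathbb{S}=\langle a_1,a_2,a_3\rangle$ (the set of $\mathbb{N}$-linear combinations of $a_1,a_2,a_3$) and $a\in\mathbb{S}$, a factorization of $a$ is a tuple $(\eta_1,\eta_2,\eta_3)\in\mathbb{N}^3$ with $\eta_1a_1+\eta_2a_2+\eta_3a_3=a$. *)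

From mathcomp Require Import all_boot.

Definition is_factorization (a1 a2 a3 a : nat) (e : nat * nat * nat) : Prop :=
  let: (e1, e2, e3) := e in e1 * a1 + e2 * a2 + e3 * a3 = a.

(** Write the even generators as [4] and [2 d] with [d = 2 alpha + 1] odd.
   Since [m] is odd, a factorization [(e1, e2, e3)] of [n] has [e3] of the
   parity of [n], and [e3 m <= n]; for [n = 4 d < 2 m] and [n = 2 m] this
   leaves [e3 = 0], or [e3 = 2] when [n = 2 m].  With [e3 = 0], halving leaves
   [2 e1 + e2 d = n / 2], whose solutions, [d] being odd, are the [e2] with
   [e2 d <= n / 2] of the parity of [n / 2], each with
   [e1 = (n / 2 - e2 d) / 2]. *)

From mathcomp Require Import all_boot zify.

Lemma double_add_odd_mulP (d n x y : nat) : odd d ->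
  2 * x + y * d = n <-> [/\ y * d <= n, odd y = odd n & x = (n - y * d) %/ 2].
Proof.
move=> d_odd; split.
- move=> <-; rewrite oddD !oddM d_odd andbT /=.
  by split=> //; [lia | rewrite addnK mulKn].
- case=> le_yd_n odd_y ->.
  have even_diff : ~~ odd (n - y * d) by rewrite oddB // oddM d_odd odd_y andbT addbb.
  by rewrite mulnC divnK ?dvdn2 // subnK.
Qed.

Section Factorizations.

Variables (d m : nat).
Hypotheses (d_odd : odd d) (m_odd : odd m).

Let d_gt0 : 0 < d := odd_gt0 d_odd.

Lemma factorization_coef3_odd {n e1 e2 e3 : nat} :
  is_factorization 4 (2 * d) m n (e1, e2, e3) -> odd n = odd e3.
Proof. by rewrite /is_factorization => <-; rewrite !oddD !oddM m_odd andbT /= !andbF. Qed.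

Lemma factorization_coef3_le {n e1 e2 e3 : nat} :
  is_factorization 4 (2 * d) m n (e1, e2, e3) -> e3 * m <= n.
Proof. by rewrite /is_factorization => <-; rewrite leq_addl. Qed.

Lemma factorization_coef3_0 (n e1 e2 : nat) :
  is_factorization 4 (2 * d) m (2 * n) (e1, e2, 0) <-> 2 * e1 + e2 * d = n.
Proof. by rewrite /is_factorization; lia. Qed.

Lemma factorizations_4d : 2 * d < m -> forall e1 e2 e3 : nat,
  is_factorization 4 (2 * d) m (4 * d) (e1, e2, e3) <->
  (e1, e2, e3) = (d, 0, 0) \/ (e1, e2, e3) = (0, 2, 0).
Proof.
move=> lt_2d_m e1 e2 e3; split; last first.
  by case=> -[-> -> ->] /=; lia.
move=> fact; have e3_0 : e3 = 0.
  have e3_even : ~~ odd e3 by rewrite -(factorization_coef3_odd fact) oddM.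
  have := factorization_coef3_le fact.
  by case: e3 e3_even {fact} => [|[|e3]] //= _; nia.
move: fact; rewrite {}e3_0 -[4 * d]/(2 * 2 * d) -mulnA factorization_coef3_0.
rewrite double_add_odd_mulP // oddM d_odd /= => -[le_e2d_2d e2_even ->].
have : e2 <= 2 by rewrite -(leq_pmul2r d_gt0).
case: e2 e2_even {le_e2d_2d} => [|[|[|]]] //= _ _; [left | right].
  by rewrite subn0 mulKn.
by rewrite subnn div0n.
Qed.

Lemma factorizations_2m (e1 e2 e3 : nat) :
  is_factorization 4 (2 * d) m (2 * m) (e1, e2, e3) <->
  (e1, e2, e3) = (0, 0, 2) \/
  exists k : nat, [/\ 0 < k, odd k, k * d <= m &
                      (e1, e2, e3) = ((m - k * d) %/ 2, k, 0)].
Proof.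
split=> [fact | ]; last first.
  case=> [[-> -> ->] | [k [_ k_odd le_kd_m [-> -> ->]]]].
    by rewrite /is_factorization; lia.
  by apply/factorization_coef3_0/double_add_odd_mulP; rewrite ?m_odd.
have e3_even : ~~ odd e3 by rewrite -(factorization_coef3_odd fact) oddM.
have : e3 <= 2 by rewrite -(leq_pmul2r (odd_gt0 m_odd)) (factorization_coef3_le fact).
case: e3 e3_even fact => [|[|[|e3]]] // _ fact _; [right | left].
  move: fact; rewrite factorization_coef3_0 double_add_odd_mulP //.
  case=> le_e2d_m odd_e2 ->; exists e2; rewrite m_odd in odd_e2.
  by split; rewrite ?odd_gt0.
by move: fact; rewrite /is_factorization => fact; congr (_, _, _); nia.
Qed.

End Factorizations.

Theorem theorem5 (alpha m : nat) :
  0 < m -> odd m -> 4 * alpha + 2 < m ->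
  (forall e1 e2 e3 : nat,
     is_factorization 4 (4 * alpha + 2) m (8 * alpha + 4) (e1, e2, e3) <->
     ((e1, e2, e3) = (2 * alpha + 1, 0, 0) \/ (e1, e2, e3) = (0, 2, 0))) /\
  (forall e1 e2 e3 : nat,
     is_factorization 4 (4 * alpha + 2) m (2 * m) (e1, e2, e3) <->
     ((e1, e2, e3) = (0, 0, 2) \/
      exists k : nat, [/\ 0 < k, odd k, k * (2 * alpha + 1) <= m &
        (e1, e2, e3) = ((m - k * (2 * alpha + 1)) %/ 2, k, 0)])).
Proof.
move=> _ m_odd lt_2d_m.
have d_odd : odd (2 * alpha + 1) by rewrite oddD oddM.
have gen2E : 4 * alpha + 2 = 2 * (2 * alpha + 1) by lia.
have beta1E : 8 * alpha + 4 = 4 * (2 * alpha + 1) by lia.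
rewrite gen2E beta1E in lt_2d_m *.
split; [exact: factorizations_4d | exact: factorizations_2m].
Qed.
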